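(* Let $m\ge 2$ be an integer and set $n=15\cdot 2^{2(m-2)}$, $a=6\cdot 2^{m-2}$, $b=8\cdot 2^{m-2}$. Let $\mathscr{A}_n=\mathrm{Circ}(n,\{\pm(\lfloor n/2\rfloor+1),\dots,\pm(\lfloor n/2\rfloor+a/2)\})$ and $\mathscr{B}_n=\mathrm{Circ}(n,\{\pm1,\dots,\pm a/2\})$ (both $n$-vertex $a$-regular circulant graphs; we also write $\mathscr{A}_n,\mathscr{B}_n$ for their adjacency matrices), and let $C_n$ be the adjacency matrix of an arbitrary $n$-vertex circulant graph of degree $b$. Let $G_n$ be the graph on $2n+2$ vertices with adjacency matrix \[ \begin{bmatrix} 0 & \mathbf{j}_n^T & 0 & 0\\ \mathbf{j}_n & \mathscr{A}_n & C_n & 0\\ 0 & C_n^T & \mathscr{B}_n & \mathbf{j}_n\\ 0 & 0 & \mathbf{j}_n^T & 0 \end{bmatrix}, \] and let $a_n$ and $b_n$ be the vertices corresponding to the first and last rows, respectively. Then $G_n$ has perfect state transfer between $a_n$ and $b_n$, but there is no automorphism $\tau$ of $G_n$ with $\tau(a_n)=b_n$.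
   Context: $\mathrm{Circ}(n,S)$ denotes the circulant graph (Cayley graph of $\mathbb{Z}_n$) with vertex set $\mathbb{Z}_n$ where $x,y$ are adjacent iff $x-y\in S$ (with $S=-S$). $\mathbf{j}_n$ is the all-ones column vector of length $n$. A graph with adjacency matrix $A$ has perfect state transfer from $u$ to $v$ if $|\langle v|e^{-itA}|u\rangle|=1$ for some time $t$, where $|u\rangle$ is the standard basis vector of vertex $u$. An automorphism is a bijection of the vertex set preserving adjacency and non-adjacency. *)

From HB Require Import structures.
From mathcomp Require Import all_boot all_order all_algebra.
From mathcomp Require Import all_classical all_reals topology normedtype sequences.
From mathcomp Require Import complex fingroup perm.
Set Implicit Arguments. Unset Strict Implicit. Unset Printing Implicit Defensive.
Import Order.TTheory GRing.Theory Num.Theory numFieldNormedType.Exports.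
Local Open Scope ring_scope.
Local Open Scope complex_scope.
Local Open Scope classical_set_scope.

(* difference x - y in Z_n, with Z_n represented by 'I_n *)
Definition zdiff n (x y : 'I_n) : 'I_n :=
  Ordinal (ltn_pmod (x + n - y) (leq_ltn_trans (leq0n x) (ltn_ord x))).

(* adjacency matrix of Circ(n,S): x ~ y iff x - y \in S *)
Definition circ_mx (T : pzRingType) n (S : {set 'I_n}) : 'M[T]_n :=
  \matrix_(i, j) (zdiff i j \in S)%:R.

(* the residue set {±x : x \in l} in Z_n *)
Definition pm_set n (l : seq nat) : {set 'I_n} :=
  [set k : 'I_n | has (fun x => (val k == x %% n)%N || (val k == (n - x %% n) %% n)%N) l].

(* a valid connection set of a (simple, undirected) circulant graph: 0 \notin S, S = -S *)
Definition circ_conn n (S : {set 'I_n}) : Prop :=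
  (forall k, k \in S -> val k != 0%N) /\
  (forall k, k \in S -> exists2 k', k' \in S & val k' = ((n - k) %% n)%N).

Definition nn (m : nat) : nat := 15 * 2 ^ (2 * (m - 2)).
Definition aa (m : nat) : nat := 6 * 2 ^ (m - 2).
Definition bb (m : nat) : nat := 8 * 2 ^ (m - 2).

Definition A_set n a : {set 'I_n} := pm_set n [seq (n./2 + j)%N | j <- iota 1 a./2].
Definition B_set n a : {set 'I_n} := pm_set n (iota 1 a./2).

Definition jvec (T : pzRingType) n : 'cV[T]_n := const_mx 1.

Definition G_mx (T : pzRingType) n (A B C : 'M[T]_n) : 'M[T]_((1 + n) + (n + 1)) :=
  block_mx
    (block_mx (0 : 'M_1) (jvec T n)^T (jvec T n) A)
    (block_mx (0 : 'M_(1, n)) (0 : 'M_(1, 1)) C (0 : 'M_(n, 1)))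
    (block_mx (0 : 'M_(n, 1)) C^T (0 : 'M_1) (0 : 'M_(1, n)))
    (block_mx B (jvec T n) (jvec T n)^T (0 : 'M_1)).

Definition a_vx n : 'I_((1 + n) + (n + 1)) := lshift (n + 1) (lshift n (ord0 : 'I_1)).
Definition b_vx n : 'I_((1 + n) + (n + 1)) := rshift (1 + n) (rshift n (ord0 : 'I_1)).

Definition expm_partial (R : rcfType) N (t : R) (A : 'M[R[i]]_N) (K : nat) : 'M[R[i]]_N :=
  \sum_(k < K) (((- 'i * t%:C) ^+ k / (k`!)%:R) *: A ^+ k).

Definition PST (R : realType) N (A : 'M[R[i]]_N) (u v : 'I_N) : Prop :=
  exists (t : R) (L : R[i]),
    (fun K : nat => complex.Re (expm_partial t A K v u)) @ \oo --> complex.Re L /\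
    (fun K : nat => complex.Im (expm_partial t A K v u)) @ \oo --> complex.Im L /\
    `|L| = 1.

Definition is_aut (T : pzRingType) N (A : 'M[T]_N) (s : {perm 'I_N}) : Prop :=
  forall x y, A (s x) (s y) = A x y.

(* The vertex a_n, the copy of A_n, the copy of B_n and the vertex b_n form an
   equitable partition of G_n, so the walks from a_n only see its 4 x 4 quotient
   matrix; with q = 2^(m-2) its eigenvalues are 15q, -q, 3q and -5q.  Hence the
   (b_n, a_n) entry of e^(-itG_n) is a combination of four phases e^(-it lambda),
   and at t = pi/(4q) these all agree up to sign, giving modulus 1.
   An automorphism sending a_n to b_n maps the neighbourhood of b_n, which
   induces B_n, injectively into the neighbourhood of a_n, which induces A_n.
   But B_n contains two triangles sharing an edge, and A_n does not: for m >= 3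
   it is even triangle free. *)

From mathcomp Require Import all_boot all_order all_algebra.
From mathcomp Require Import all_classical all_reals topology normedtype sequences.
From mathcomp Require Import complex fingroup perm.
From mathcomp Require Import trigo zify ring.

Set Implicit Arguments. Unset Strict Implicit. Unset Printing Implicit Defensive.
Import Order.TTheory GRing.Theory Num.Theory numFieldNormedType.Exports.
Local Open Scope ring_scope.

Lemma zdiff_val n (i j : 'I_n) :
  val (zdiff i j) = (if (j <= i)%N then i - j else i + n - j)%N.
Proof.
have := ltn_ord i; have := ltn_ord j; rewrite /zdiff /=.
case: ifP => ji *; last by rewrite modn_small; lia.
by rewrite (_ : i + n - j = i - j + n)%N ?modnDr ?modn_small; lia.
Qed.

Lemma zdiff_injr n (i : 'I_n) : injective (zdiff i).
Proof.
move=> j k /(congr1 val); rewrite !zdiff_val => E; apply: val_inj => /=.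
by have := ltn_ord i; have := ltn_ord j; have := ltn_ord k; move: E; do 2 case: ifP; lia.
Qed.

Lemma zdiff_injl n (j : 'I_n) : injective (fun i : 'I_n => zdiff i j).
Proof.
move=> i k /(congr1 val); rewrite !zdiff_val => E; apply: val_inj => /=.
by have := ltn_ord i; have := ltn_ord j; have := ltn_ord k; move: E; do 2 case: ifP; lia.
Qed.

Lemma A_setP n a (k : 'I_n) : (a./2 < n - n./2)%N ->
  (k \in A_set n a) =
  ((n - n./2 - a./2 <= k < n - n./2) || (n./2 < k <= n./2 + a./2))%N.
Proof.
move=> ha; have := ltn_ord k; rewrite /A_set /pm_set inE has_map => kn.
apply/hasP/idP => [[j] | /orP[] /andP[k1 k2]].
- by rewrite mem_iota /= => /andP[j1 j2]; rewrite !modn_small; lia.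
- by exists (n - n./2 - k)%N; rewrite ?mem_iota /preim /= ?modn_small; lia.
- by exists (k - n./2)%N; rewrite ?mem_iota /preim /= ?modn_small; lia.
Qed.

Lemma B_setP n a (k : 'I_n) : (a./2 < n)%N ->
  (k \in B_set n a) = ((0 < k <= a./2) || (n - a./2 <= k < n))%N.
Proof.
move=> ha; have := ltn_ord k; rewrite /B_set /pm_set inE => kn.
apply/hasP/idP => [[j] | /orP[] /andP[k1 k2]].
- by rewrite mem_iota /= => /andP[j1 j2]; rewrite !modn_small; lia.
- by exists (k : nat); rewrite ?mem_iota /= ?modn_small; lia.
- by exists (n - k)%N; rewrite ?mem_iota /= ?modn_small; lia.
Qed.

Lemma count_iota_interval lo hi n :
  count (fun k => lo <= k < hi)%N (iota 0 n) = (minn hi n - minn lo n)%N.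
Proof.
elim: n => [|n IH]; first by rewrite !minn0.
by rewrite -addn1 iotaD count_cat IH /= add0n addn0; case: (lo <= n < hi)%N /boolP; lia.
Qed.

Lemma card_ord_intervals n l1 h1 l2 h2 : (h1 <= l2 <= h2)%N -> (h2 <= n)%N ->
  #|[set k : 'I_n | (l1 <= k < h1) || (l2 <= k < h2)]%N| = (h1 - l1 + (h2 - l2))%N.
Proof.
move=> h1l2 h2n; pose P1 k := (l1 <= k < h1)%N; pose P2 k := (l2 <= k < h2)%N.
have -> : #|[set k : 'I_n | P1 k || P2 k]| = count (predU P1 P2) (iota 0 n).
  rewrite -sum1_card -val_enum_ord count_map -sum1_count big_enum_cond /=.
  by apply: eq_bigl => k; rewrite inE.
have := count_predUI P1 P2 (iota 0 n).
rewrite [count (predI _ _) _](@eq_count _ _ pred0) ?count_pred0 => [|k /=].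
  by rewrite addn0 => ->; rewrite !count_iota_interval; lia.
by apply/negP; rewrite /P1 /P2; lia.
Qed.

Lemma card_A_set n a : (a./2 < n - n./2)%N -> #|A_set n a| = (a./2).*2.
Proof.
move=> ha; have -> : A_set n a = [set k : 'I_n |
    (n - n./2 - a./2 <= k < n - n./2) || ((n./2).+1 <= k < (n./2 + a./2).+1)]%N.
  by apply/setP => k; rewrite A_setP // inE.
by rewrite card_ord_intervals; lia.
Qed.

Lemma card_B_set n a : (a./2 < n - a./2)%N -> #|B_set n a| = (a./2).*2.
Proof.
move=> ha; have -> : B_set n a = [set k : 'I_n |
    (1 <= k < (a./2).+1) || (n - a./2 <= k < n)]%N.
  by apply/setP => k; rewrite B_setP ?inE; lia.
by rewrite card_ord_intervals; lia.
Qed.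

Definition diamond_free n (S : {set 'I_n}) : Prop :=
  forall z0 z1 z2 z3 : 'I_n, z2 != z3 ->
  ~ [/\ zdiff z1 z0 \in S, zdiff z2 z0 \in S, zdiff z2 z1 \in S,
        zdiff z3 z0 \in S & zdiff z3 z1 \in S].

(* A_15 has triangles, such as 0, 5, 10, but no two of them share an edge. *)
Lemma diamond_free_A_set_15 : diamond_free (A_set 15 6).
Proof.
move=> z0 z1 z2 z3; rewrite -val_eqE !A_setP // !zdiff_val /= => z23.
have := ltn_ord z0; have := ltn_ord z1; have := ltn_ord z2; have := ltn_ord z3.
move: (val z0) (val z1) (val z2) (val z3) z23 => x0 x1 x2 x3 z23 *.
by case; do 5 case: ifP; lia.
Qed.

(* The connection set of A_n lies within a./2 of n/2, so for a./2 small the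
   sum of two connections is never a connection: A_n is triangle free. *)
Lemma diamond_free_A_set_even n a :
  ~~ odd n -> (3 * a./2 < n./2)%N -> diamond_free (A_set n a).
Proof.
move=> n_even ha z0 z1 z2 z3 _ [d10 d20 d21 _ _].
have en : n = (n./2).*2 by rewrite -[LHS]odd_double_half (negbTE n_even).
move: d10 d20 d21; rewrite !A_setP ?zdiff_val; try lia.
have := ltn_ord z0; have := ltn_ord z1; have := ltn_ord z2.
move: (val z0) (val z1) (val z2) => x0 x1 x2.
by do 3 case: ifP; lia.
Qed.

Lemma B_set_not_diamond_free n a :
  (2 <= a./2)%N -> (a./2 < n - a./2)%N -> ~ diamond_free (B_set n a).
Proof.
move=> ha2 ha.
have [o0 o1 o2 on1] : [/\ (0 < n), (1 < n), (2 < n) & (n.-1 < n)]%N by split; lia.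
move/(_ (Ordinal o0) (Ordinal o1) (Ordinal o2) (Ordinal on1)); apply.
  by apply/eqP => /(congr1 val) /=; lia.
by rewrite !B_setP ?zdiff_val /=; try lia; case: ifP; split; lia.
Qed.

Lemma diamond_free_embedding n (S S' : {set 'I_n}) (f : 'I_n -> 'I_n) :
  injective f -> (forall i j, (zdiff (f i) (f j) \in S') = (zdiff i j \in S)) ->
  diamond_free S' -> diamond_free S.
Proof.
move=> f_inj fS dS' z0 z1 z2 z3 z23 [d10 d20 d21 d30 d31].
apply: (dS' (f z0) (f z1) (f z2) (f z3)); first by rewrite (inj_eq f_inj).
by rewrite !fS.
Qed.

Lemma bool_natr_inj (T : nzRingType) (b1 b2 : bool) : b1%:R = b2%:R :> T -> b1 = b2.
Proof. by case: b1; case: b2 => // /eqP; rewrite ?oner_eq0 // eq_sym oner_eq0. Qed.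

Definition x_vx n (j : 'I_n) : 'I_((1 + n) + (n + 1)) := lshift (n + 1) (rshift 1 j).
Definition y_vx n (j : 'I_n) : 'I_((1 + n) + (n + 1)) := rshift (1 + n) (lshift 1 j).

Section GraphEntries.
Variables (T : nzRingType) (n : nat) (A B C : 'M[T]_n).
Local Notation G := (G_mx A B C).

Lemma G_mx_b_y j : G (b_vx n) (y_vx j) = 1.
Proof. by rewrite /G_mx /b_vx /y_vx block_mxEdr block_mxEdl !mxE. Qed.

Lemma G_mx_x_x i j : G (x_vx i) (x_vx j) = A i j.
Proof. by rewrite /G_mx /x_vx block_mxEul block_mxEdr. Qed.

Lemma G_mx_y_y i j : G (y_vx i) (y_vx j) = B i j.
Proof. by rewrite /G_mx /y_vx block_mxEdr block_mxEul. Qed.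

Lemma G_mx_a_neighbour v : G (a_vx n) v != 0 -> exists j, v = x_vx j.
Proof.
rewrite -[v]fintype.splitK; case: (fintype.split v) => v' /=;
  rewrite -[v']fintype.splitK; case: (fintype.split v') => v'' /=.
- by rewrite /G_mx /a_vx block_mxEul block_mxEul !mxE eqxx.
- by exists v''.
- by rewrite /G_mx /a_vx block_mxEur block_mxEul !mxE eqxx.
- by rewrite /G_mx /a_vx block_mxEur block_mxEur !mxE eqxx.
Qed.

(* s^-1 maps N(b_n), the copy of B, into N(a_n), the copy of A. *)
Lemma G_mx_aut_embedding (s : {perm 'I_((1 + n) + (n + 1))}) :
  is_aut G s -> s (a_vx n) = b_vx n ->
  exists2 f : 'I_n -> 'I_n, injective f & forall i j, A (f i) (f j) = B i j.
Proof.
move=> s_aut sab.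
have /fin_all_exists [f sf] : forall i, exists j, (s^-1)%g (y_vx i) = x_vx j.
  by move=> i; apply: G_mx_a_neighbour; rewrite -s_aut permKV sab G_mx_b_y oner_neq0.
exists f => [i j fij | i j].
  have : x_vx (f i) = x_vx (f j) by rewrite fij.
  by rewrite -!sf => /perm_inj/rshift_inj/lshift_inj.
by rewrite -G_mx_x_x -!sf -s_aut !permKV G_mx_y_y.
Qed.
End GraphEntries.

Lemma G_mx_no_swap_aut (T : nzRingType) n a (C : 'M[T]_n) :
  diamond_free (A_set n a) -> (2 <= a./2)%N -> (a./2 < n - a./2)%N ->
  ~ (exists s : {perm 'I_((1 + n) + (n + 1))},
       is_aut (G_mx (circ_mx T (A_set n a)) (circ_mx T (B_set n a)) C) s /\
       s (a_vx n) = b_vx n).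
Proof.
move=> dA ha2 ha [s [s_aut sab]].
have [f f_inj fAB] := G_mx_aut_embedding s_aut sab.
apply: (B_set_not_diamond_free ha2 ha); apply: (diamond_free_embedding f_inj _ dA) => i j.
by apply: (@bool_natr_inj T); have := fAB i j; rewrite !mxE.
Qed.

Section RowSums.
Variables (T : pzRingType) (n : nat).

Lemma sum_mem_natr (S : {set 'I_n}) : \sum_k ((k \in S)%:R : T) = #|S|%:R.
Proof. by rewrite -sumr_const [RHS]big_mkcond; apply: eq_bigr => k _; case: (k \in S). Qed.

Lemma circ_mx_mul_jvec (S : {set 'I_n}) : circ_mx T S *m jvec T n = #|S|%:R *: jvec T n.
Proof.
apply/matrixP => i j; rewrite !mxE mulr1; under eq_bigr do rewrite !mxE mulr1.
by rewrite -sum_mem_natr [RHS](reindex_inj (@zdiff_injr n i)).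
Qed.

Lemma tr_circ_mx_mul_jvec (S : {set 'I_n}) :
  (circ_mx T S)^T *m jvec T n = #|S|%:R *: jvec T n.
Proof.
apply/matrixP => i j; rewrite !mxE mulr1; under eq_bigr do rewrite !mxE mulr1.
by rewrite -sum_mem_natr [RHS](reindex_inj (@zdiff_injl n i)).
Qed.

Lemma tr_jvec_mul_jvec : (jvec T n)^T *m jvec T n = (n%:R)%:M.
Proof.
apply/matrixP => i k; rewrite !mxE (ord1 i) (ord1 k) mulr1n.
by under eq_bigr do rewrite !mxE mulr1; rewrite sumr_const card_ord.
Qed.
End RowSums.

(* A vector constant on each cell of the equitable partition
   {a_n}, V(A_n), V(B_n), {b_n} of the vertex set of G_n. *)
Definition cell_vec (T : pzRingType) n (al be ga de : T) : 'cV[T]_((1 + n) + (n + 1)) :=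
  col_mx (col_mx al%:M (be *: jvec T n)) (col_mx (ga *: jvec T n) de%:M).

Lemma G_mx_mul_cell_vec (T : comNzRingType) n (A B C : 'M[T]_n) (a c al be ga de : T) :
  A *m jvec T n = a *: jvec T n -> B *m jvec T n = a *: jvec T n ->
  C *m jvec T n = c *: jvec T n -> C^T *m jvec T n = c *: jvec T n ->
  G_mx A B C *m cell_vec n al be ga de =
  cell_vec n (n%:R * be) (al + a * be + c * ga) (c * be + a * ga + de) (n%:R * ga).
Proof.
move=> hA hB hC hCt.
rewrite /G_mx /cell_vec !mul_block_col ?mul0mx ?mulmx0 ?add0r ?addr0 !add_col_mx.
rewrite ?add0r ?addr0 -!scalemxAr tr_jvec_mul_jvec hA hB hC hCt !mul_mx_scalar !scalerA.
by rewrite !scale_scalar_mx !scalerDl ![_ * n%:R]mulrC ![be * _]mulrC ![ga * _]mulrC addrA.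
Qed.

Lemma delta_a_cell_vec (T : pzRingType) n :
  delta_mx (a_vx n) 0 = cell_vec n (1 : T) 0 0 0.
Proof.
apply/matrixP => v j; rewrite /cell_vec (ord1 j).
rewrite -[v]fintype.splitK; case: (fintype.split v) => v' /=;
  rewrite -[v']fintype.splitK; case: (fintype.split v') => v'' /=.
- by rewrite col_mxEu col_mxEu !mxE (ord1 v'') /a_vx.
- by rewrite col_mxEu col_mxEd !mxE /a_vx /= mul0r.
- by rewrite col_mxEd col_mxEu !mxE /a_vx /= mul0r.
- by rewrite col_mxEd col_mxEd !mxE (ord1 v'') /a_vx.
Qed.

Lemma cell_vec_b (T : pzRingType) n (al be ga de : T) : cell_vec n al be ga de (b_vx n) 0 = de.
Proof. by rewrite /cell_vec /b_vx col_mxEd col_mxEd !mxE. Qed.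

Section WalkCounts.
Variables (R : realFieldType) (q : R).

(* The quotient matrix of the equitable partition of G_n with n = 15 q^2,
   a = 6 q, b = 8 q has eigenvalues 15 q, -q, 3 q and -5 q; walks_a k,
   walks_x k, walks_y k and walks_b k are the entries of G_n^k e_(a_n) on the
   four cells, expanded along these eigenvalues. *)
Definition pst_eigen (i : 'I_4) : R := [:: 15 * q; - q; 3 * q; - (5 * q)]`_i.
Definition pst_weight (i : 'I_4) : R := [:: 1/32; 15/32; - (5/16); - (3/16)]`_i.

Definition walks_a k : R :=
  1/32 * (15 * q) ^+ k + 15/32 * (- q) ^+ k + 5/16 * (3 * q) ^+ k + 3/16 * (- (5 * q)) ^+ k.
Definition walks_x k : R :=
  (1/32 * (15 * q) ^+ k - 1/32 * (- q) ^+ k + 1/16 * (3 * q) ^+ k - 1/16 * (- (5 * q)) ^+ k) / q.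
Definition walks_y k : R :=
  (1/32 * (15 * q) ^+ k - 1/32 * (- q) ^+ k - 1/16 * (3 * q) ^+ k + 1/16 * (- (5 * q)) ^+ k) / q.
Definition walks_b k : R := \sum_(i < 4) pst_weight i * pst_eigen i ^+ k.

Hypothesis q_neq0 : q != 0.

Lemma walks_0 : [/\ walks_a 0 = 1, walks_x 0 = 0, walks_y 0 = 0 & walks_b 0 = 0].
Proof.
rewrite /walks_a /walks_x /walks_y /walks_b !big_ord_recr !big_ord0.
rewrite /pst_weight /pst_eigen /= !expr0.
by split; field.
Qed.

Lemma walks_S k :
  [/\ walks_a k.+1 = 15 * q ^+ 2 * walks_x k,
      walks_x k.+1 = walks_a k + 6 * q * walks_x k + 8 * q * walks_y k,
      walks_y k.+1 = 8 * q * walks_x k + 6 * q * walks_y k + walks_b k &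
      walks_b k.+1 = 15 * q ^+ 2 * walks_y k].
Proof.
rewrite /walks_a /walks_x /walks_y /walks_b !big_ord_recr !big_ord0.
rewrite /pst_weight /pst_eigen /= !(exprS _ k).
by split; field.
Qed.
End WalkCounts.

Local Open Scope complex_scope.

Section WalksInG.
Variables (R : rcfType) (n : nat) (q : R) (A B C : 'M[R[i]]_n).
Hypotheses (q_neq0 : q != 0) (nq : n%:R = 15 * q ^+ 2).
Hypotheses (A_reg : A *m jvec _ n = (6 * q)%:C *: jvec _ n)
           (B_reg : B *m jvec _ n = (6 * q)%:C *: jvec _ n)
           (C_reg : C *m jvec _ n = (8 * q)%:C *: jvec _ n)
           (Ct_reg : C^T *m jvec _ n = (8 * q)%:C *: jvec _ n).

Lemma G_mx_pow_delta_a k :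
  G_mx A B C ^+ k *m delta_mx (a_vx n) 0 =
  cell_vec n (walks_a q k)%:C (walks_x q k)%:C (walks_y q k)%:C (walks_b q k)%:C.
Proof.
elim: k => [|k IH].
  have [-> -> -> ->] := walks_0 q_neq0.
  by rewrite expr0 mul1mx delta_a_cell_vec rmorph1 rmorph0.
rewrite exprS -mulmxE -mulmxA IH (G_mx_mul_cell_vec _ _ _ _ A_reg B_reg C_reg Ct_reg).
have [-> -> -> ->] := walks_S q_neq0 k.
by rewrite -nq !rmorphD !rmorphM !rmorph_nat.
Qed.

Lemma G_mx_pow_b_a k : (G_mx A B C ^+ k) (b_vx n) (a_vx n) = (walks_b q k)%:C.
Proof.
transitivity ((G_mx A B C ^+ k *m delta_mx (a_vx n) (0 : 'I_1)) (b_vx n) 0).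
  by rewrite -colE mxE.
by rewrite G_mx_pow_delta_a cell_vec_b.
Qed.
End WalksInG.

Section ExpNi.
Variable R : realType.

Definition expNi (x : R) : R[i] := Complex (cos x) (- sin x).

Lemma norm_expNi x : `|expNi x| = 1.
Proof. by rewrite normc_def /= sqrrN cos2Dsin2 sqrtr1. Qed.

Lemma expNiDpi x : expNi (x + pi) = - expNi x.
Proof. by rewrite /expNi cosDpi sinDpi. Qed.

Lemma expNiD2pi x : expNi (x + pi *+ 2) = expNi x.
Proof. by rewrite /expNi cosD2pi sinD2pi. Qed.

Lemma exp_coeff_i (x : R) k :
  (- 'i * x%:C) ^+ k / k`!%:R = Complex (cos_coeff x k) (- sin_coeff x k).
Proof.
have e2 p : (- 'i) ^+ p.*2 = (-1) ^+ p :> R[i] by rewrite -mul2n exprM sqrrN sqr_i.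
have := odd_double_half k; case: (odd k) => /= <-.
  rewrite add1n cos_coeff_odd exprMn exprSr e2 /sin_coeff /= odd_double /= doubleK mul1r.
  have -> : Complex 0 (- ((-1) ^+ k./2 * x ^+ k./2.*2.+1 / k./2.*2.+1`!%:R)) =
            - 'i * ((-1) ^+ k./2 * x ^+ k./2.*2.+1 / k./2.*2.+1`!%:R)%:C.
    by apply/eqP; rewrite eq_complex /=; apply/andP; split; apply/eqP; ring.
  rewrite !rmorphM rmorphXn rmorphN1 fmorphV rmorph_nat rmorphXn exprS; ring.
rewrite add0n sin_coeff_even oppr0 complexr0 exprMn e2 /cos_coeff /= odd_double /= doubleK.
by rewrite mul1r !rmorphM rmorphXn rmorphN1 fmorphV rmorph_nat rmorphXn.
Qed.

Lemma exp_partial_real (t lam : R) K :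
  \sum_(k < K) (- 'i * t%:C) ^+ k / k`!%:R * (lam ^+ k)%:C =
  Complex (series (cos_coeff (t * lam)) K) (- series (sin_coeff (t * lam)) K).
Proof.
elim: K => [|K IH]; first by rewrite big_ord0 /series /= !big_geq // oppr0.
rewrite big_ord_recr /= IH rmorphXn mulrAC -exprMn -mulrA -rmorphM exp_coeff_i.
by rewrite !seriesSr opprD.
Qed.
End ExpNi.

Section Spectral.
Variables (R : realType) (N : nat) (A : 'M[R[i]]_N) (u v : 'I_N).
Variables (t : R) (m : nat) (w lam : 'I_m -> R).
Hypothesis A_pow : forall k, (A ^+ k) v u = (\sum_(i < m) w i * lam i ^+ k)%:C.

Lemma expm_partial_spectral K : expm_partial t A K v u =
  \sum_(i < m) (w i)%:C *
    Complex (series (cos_coeff (t * lam i)) K) (- series (sin_coeff (t * lam i)) K).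
Proof.
rewrite /expm_partial summxE; under eq_bigr do rewrite mxE A_pow rmorph_sum mulr_sumr.
rewrite exchange_big /=; apply: eq_bigr => i _; rewrite -exp_partial_real mulr_sumr.
by apply: eq_bigr => k _; rewrite rmorphM mulrCA.
Qed.

Lemma Re_expm_partial_spectral K : complex.Re (expm_partial t A K v u) =
  \sum_(i < m) w i * series (cos_coeff (t * lam i)) K.
Proof.
rewrite expm_partial_spectral (raddf_sum (@complex.Re R)).
by apply: eq_bigr => i _ /=; rewrite mul0r subr0.
Qed.

Lemma Im_expm_partial_spectral K : complex.Im (expm_partial t A K v u) =
  \sum_(i < m) w i * - series (sin_coeff (t * lam i)) K.
Proof.
rewrite expm_partial_spectral (raddf_sum (@complex.Im R)).
by apply: eq_bigr => i _ /=; rewrite mul0r addr0.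
Qed.

Lemma PST_spectral : `|\sum_(i < m) (w i)%:C * expNi (t * lam i)| = 1 -> PST A u v.
Proof.
move=> L1; exists t, (\sum_(i < m) (w i)%:C * expNi (t * lam i)); split; last split => //.
- rewrite (raddf_sum (@complex.Re R)); under eq_fun do rewrite Re_expm_partial_spectral.
  apply: cvg_big => [|i _]; first exact: add_continuous.
  rewrite /= mul0r subr0; apply: cvgMl_tmp; apply: cvg_toP.
    exact: is_cvg_series_cos_coeff.
  by rewrite unlock.
- rewrite (raddf_sum (@complex.Im R)); under eq_fun do rewrite Im_expm_partial_spectral.
  apply: cvg_big => [|i _]; first exact: add_continuous.
  rewrite /= mul0r addr0; apply: cvgMl_tmp; apply: cvgN; apply: cvg_toP.
    exact: is_cvg_series_sin_coeff.
  by rewrite unlock.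
Qed.
End Spectral.

(* At t = pi / (4 q) all four phases e^(-i t lambda) agree up to the signs of
   the weights, and the absolute values of the weights sum to 1. *)
Lemma pst_phase (R : realType) (q : R) : q != 0 ->
  \sum_(i < 4) (pst_weight R i)%:C * expNi (pi / (4 * q) * pst_eigen q i) =
  expNi (- (pi / 4)).
Proof.
move=> q_neq0; rewrite !big_ord_recr big_ord0 /pst_weight /pst_eigen /= add0r.
have e1 : pi / (4 * q) * (15 * q) = - (pi / 4) + pi *+ 2 + pi *+ 2 by field.
have e2 : pi / (4 * q) * - q = - (pi / 4) by field.
have e3 : pi / (4 * q) * (3 * q) = - (pi / 4) + pi by field.
have e4 : pi / (4 * q) * - (5 * q) + pi *+ 2 = - (pi / 4) + pi by field.
rewrite e1 e2 e3 -[expNi (_ * - (5 * q))]expNiD2pi e4 !expNiD2pi !expNiDpi.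
have w1 : (1/32)%:C + (15/32)%:C + (5/16)%:C + (3/16)%:C = 1 :> R[i].
  by apply/eqP; rewrite eq_complex /=; apply/andP; split; apply/eqP; field.
by rewrite -[RHS]mul1r -w1 !rmorphN; ring.
Qed.

Lemma G_mx_pst (R : realType) n (q : R) (A B C : 'M[R[i]]_n) :
  q != 0 -> n%:R = 15 * q ^+ 2 ->
  A *m jvec _ n = (6 * q)%:C *: jvec _ n -> B *m jvec _ n = (6 * q)%:C *: jvec _ n ->
  C *m jvec _ n = (8 * q)%:C *: jvec _ n -> C^T *m jvec _ n = (8 * q)%:C *: jvec _ n ->
  PST (G_mx A B C) (a_vx n) (b_vx n).
Proof.
move=> q_neq0 nq A_reg B_reg C_reg Ct_reg.
apply: (@PST_spectral _ _ _ _ _ (pi / (4 * q)) _ (pst_weight R) (pst_eigen q)).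
  exact: G_mx_pow_b_a.
by rewrite pst_phase // norm_expNi.
Qed.

Lemma nn_sq m : nn m = (15 * 2 ^ (m - 2) * 2 ^ (m - 2))%N.
Proof. by rewrite /nn (mulnC 2) expnM -mulnA mulnn. Qed.

Lemma aa_half m : (aa m)./2 = (3 * 2 ^ (m - 2))%N.
Proof. by rewrite /aa (_ : 6 * _ = (3 * 2 ^ (m - 2)).*2)%N ?doubleK //; lia. Qed.

Lemma diamond_free_A_set_nn m : (2 <= m)%N -> diamond_free (A_set (nn m) (aa m)).
Proof.
case: (ltngtP m 2) => [| m3 _ | -> _]; [lia | | exact: diamond_free_A_set_15].
have r0 : (0 < 2 ^ (m - 3))%N by rewrite expn_gt0.
have er : (2 ^ (m - 2) = 2 * 2 ^ (m - 3))%N by rewrite -expnS; congr (2 ^ _)%N; lia.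
have en : nn m = (30 * 2 ^ (m - 3) * 2 ^ (m - 3)).*2 by rewrite nn_sq er; lia.
by apply: diamond_free_A_set_even; rewrite en ?odd_double // doubleK aa_half er; nia.
Qed.

Theorem theorem2 (R : realType) (m : nat) (hm : (2 <= m)%N)
  (S : {set 'I_(nn m)}) (hS : circ_conn S) (hSb : #|S| = bb m) :
  let n := nn m in
  let G := G_mx (circ_mx R[i] (A_set n (aa m))) (circ_mx R[i] (B_set n (aa m)))
                (circ_mx R[i] S) in
  PST G (a_vx n) (b_vx n) /\
  ~ (exists s : {perm 'I_((1 + n) + (n + 1))}, is_aut G s /\ s (a_vx n) = b_vx n).
Proof.
move=> n G; set q := (2 ^ (m - 2))%N.
have q_gt0 : (0 < q)%N by rewrite expn_gt0.
have [nq aq bq] : [/\ n = (15 * q * q)%N, (aa m)./2 = (3 * q)%N & bb m = (8 * q)%N].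
  by split; [exact: nn_sq | exact: aa_half |].
have [cA cB] : #|A_set n (aa m)| = (6 * q)%N /\ #|B_set n (aa m)| = (6 * q)%N.
  by rewrite card_A_set ?card_B_set aq; try nia; split; lia.
split; last by apply: G_mx_no_swap_aut; [exact: diamond_free_A_set_nn | |]; nia.
apply: (@G_mx_pst R n q%:R).
- by rewrite pnatr_eq0 -lt0n.
- by rewrite nq !natrM expr2 mulrA.
- by rewrite circ_mx_mul_jvec cA natrM rmorphM !rmorph_nat.
- by rewrite circ_mx_mul_jvec cB natrM rmorphM !rmorph_nat.
- by rewrite circ_mx_mul_jvec hSb bq natrM rmorphM !rmorph_nat.
- by rewrite tr_circ_mx_mul_jvec hSb bq natrM rmorphM !rmorph_nat.
Qed.
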